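(* Let $V\in(\mathbb{R}\cup\{-\infty\})^{n\times p}$ have no row and no column identically equal to $-\infty$, and let $T$ be the operator $$T_i(x)=\inf_{k\in[p],\,V_{ik}\neq-\infty}\Big[-V_{ik}+\max_{j\in[n],\,j\neq i}(V_{jk}+x_j)\Big],\qquad i\in[n].$$ The following assertions are equivalent: (1) the inner radius of $\operatorname{Col}(V)$ is $+\infty$; (2) no part of $(\mathbb{R}\cup\{-\infty\})^n$ is left invariant by $T$; (3) $T^n(0)$ is the vector identically equal to $-\infty$; (4) $\rho(T)=-\infty$.
   Context: $\mathbb{R}_{\max}=\mathbb{R}\cup\{-\infty\}$, with $-\infty+c=-\infty$ and $\max\emptyset=-\infty$. $\operatorname{Col}(V)=\{Vx:x\in\mathbb{R}_{\max}^p\}$ with $(Vx)_i=\max_k(V_{ik}+x_k)$. Hilbert's projective metric: $d(x,y)=\inf\{\lambda-\mu:\lambda,\mu\in\mathbb{R},\ \mu+y_i\le x_i\le\lambda+y_i\ \forall i\}$; for $a\in\mathbb{R}^n$, $B(a,r)=\{x:d(a,x)\le r\}$. The inner radius of $\operatorname{Col}(V)$ is the supremum of the radii $r$ of balls $B(a,r)$ with $a\in\mathbb{R}^n$ included in $\operatorname{Col}(V)$. For a nonempty $I\subset[n]$, the part $P_I$ is the set of vectors of $\mathbb{R}_{\max}^n$ whose support $\{i: x_i\neq-\infty\}$ equals $I$; $P_I$ is left invariant by $T$ if $T(P_I)\subset P_I$. $T^n$ is the $n$-th iterate. $\rho(T)=\sup\{\lambda\in\mathbb{R}\cup\{-\infty\}:\exists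 u\not\equiv-\infty,\ T(u)=\lambda+u\}$. *)

(* with MathComp-Analysis extended reals \bar R.
   R_max = R ∪ {-oo} is modelled inside \bar R as the elements different from +oo. *)
From HB Require Import structures.
From mathcomp Require Import all_boot all_order all_algebra.
From mathcomp Require Import all_classical all_reals ereal.
Set Implicit Arguments. Unset Strict Implicit. Unset Printing Implicit Defensive.
Import Order.TTheory GRing.Theory Num.Theory.
Local Open Scope classical_set_scope.
Local Open Scope ring_scope.
Local Open Scope ereal_scope.

Section Defs.
Variable R : realType.

Definition in_Rmax (x : \bar R) : Prop := x != +oo.

Definition Rmax_vec (m : nat) (x : 'I_m -> \bar R) : Prop :=
  forall i, in_Rmax (x i).

Definition mp_mulv (n p : nat) (V : 'I_n -> 'I_p -> \bar R) (x : 'I_p -> \bar R)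
  : 'I_n -> \bar R :=
  fun i => \big[maxe/-oo]_(k < p) (V i k + x k).

Definition Col (n p : nat) (V : 'I_n -> 'I_p -> \bar R) : set ('I_n -> \bar R) :=
  [set y | exists x, Rmax_vec x /\ y = mp_mulv V x].

Definition hilbert_d (n : nat) (x y : 'I_n -> \bar R) : \bar R :=
  ereal_inf [set z | exists l m : R, z = ((l - m)%R)%:E /\
     forall i, (m%:E + y i <= x i) /\ (x i <= l%:E + y i)].

Definition hball (n : nat) (a : 'I_n -> R) (r : R) : set ('I_n -> \bar R) :=
  [set x | Rmax_vec x /\ hilbert_d (fun i => (a i)%:E) x <= r%:E].

Definition inner_radius (n p : nat) (V : 'I_n -> 'I_p -> \bar R) : \bar R :=
  ereal_sup [set r%:E | r in [set r : R | (0 <= r)%R /\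
     exists a : 'I_n -> R, hball a r `<=` Col V]].

Definition Top (n p : nat) (V : 'I_n -> 'I_p -> \bar R) (x : 'I_n -> \bar R)
  : 'I_n -> \bar R :=
  fun i => \big[mine/+oo]_(k < p | V i k != -oo)
             (- V i k + \big[maxe/-oo]_(j < n | j != i) (V j k + x j)).

Definition supp (n : nat) (x : 'I_n -> \bar R) : {set 'I_n} :=
  [set i | x i != -oo].

Definition part (n : nat) (I : {set 'I_n}) : set ('I_n -> \bar R) :=
  [set x | Rmax_vec x /\ supp x = I].

Definition left_invariant (n : nat) (T : ('I_n -> \bar R) -> ('I_n -> \bar R))
  (I : {set 'I_n}) : Prop :=
  T @` part I `<=` part I.

Definition rho (n : nat) (T : ('I_n -> \bar R) -> ('I_n -> \bar R)) : \bar R :=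
  ereal_sup [set l | in_Rmax l /\ exists u : 'I_n -> \bar R,
     Rmax_vec u /\ (exists i, u i != -oo) /\ T u = (fun i => l + u i)].

End Defs.

From HB Require Import structures.
From mathcomp Require Import all_boot all_order all_algebra.
From mathcomp Require Import all_classical all_reals ereal.
From mathcomp Require Import lra zify.
Set Implicit Arguments. Unset Strict Implicit. Unset Printing Implicit Defensive.
Import Order.TTheory GRing.Theory Num.Theory.
Local Open Scope classical_set_scope.
Local Open Scope ereal_scope.

(* (1) => (2): a ball B(a, r) inside Col V, with r larger than the spread of
   the columns of V, forces T(-a) <= -a - r, which fails at a maximiser of a
   over an invariant part.  (2) => (3): the supports of T^m(0) decrease, and
   strictly until they are empty, since a support that repeats is an
   invariant part.  (3) => (4): an eigenvector u with finite eigenvalue r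
   would give T^n(u) = u + n r > -oo, while T^n(u) <= T^n(0) + c = -oo.
   (3) => (1): with e_i the first m such that T^m(0)_i = -oo, the balls
   centred at -C e lie in Col V for C large.  (4) => (2): on an invariant
   part, T is the minimum of the max-plus operators of its policies.  Let lam
   be the least maximal cycle mean of these and U a super-eigenvector for it.
   The normalized iterates T^m(U) - m lam either stay bounded at some
   coordinate, and their limit is an eigenvector, or sink below U - 1, and
   their weighted minimum is a super-eigenvector for an eigenvalue below lam. *)

Lemma ord_seq_repeat n (f : nat -> 'I_n) :
  exists p q, [/\ (p < q)%N, (q <= n)%N & f p = f q].
Proof.
have /injectivePn [x [y neq_xy fxy]] : ~~ injectiveb (fun x : 'I_n.+1 => f x).
  by apply/injectiveP => /leq_card; rewrite !card_ord ltnn.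
have y_le := ltn_ord y; have x_le := ltn_ord x.
case: (ltngtP x y) => [lt_xy | lt_yx | eq_xy].
- by exists x, y.
- by exists y, x.
- by move: neq_xy; rewrite (val_inj eq_xy) eqxx.
Qed.

Lemma ex_forall_antitone (I : finType) (P : pred I) (Q : nat -> I -> Prop) :
  (forall m m' i, (m <= m')%N -> Q m' i -> Q m i) ->
  (forall m, exists2 i, P i & Q m i) -> exists2 i, P i & forall m, Q m i.
Proof.
move=> antiQ allQ.
case: (pselect (exists2 i, P i & forall m, Q m i)) => // noQ; exfalso.
have /choice [fail fail_spec] : forall i, exists m, P i -> ~ Q m i.
  move=> i; case: (pselect (exists m, ~ Q m i)) => [[m nQ] | allQi].
    by exists m.
  exists 0%N => Pi _; apply: noQ; exists i => // m.
  by case: (pselect (Q m i)) => // nQ; case: allQi; exists m.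
have [i Pi Qi] := allQ (\max_i fail i).
by apply: (fail_spec i Pi); apply: antiQ Qi; apply: leq_bigmax.
Qed.

(** * Maximal cycle mean of a weighted digraph *)

Section MaxCycleMean.
Local Open Scope ring_scope.
Variables (R : realType) (n : nat) (E : rel 'I_n) (w : 'I_n -> 'I_n -> R).

Definition is_walk (s : nat -> 'I_n) (L : nat) :=
  forall t, (t < L)%N -> E (s t) (s t.+1).

Definition walk_weight (s : nat -> 'I_n) (L : nat) : R :=
  \sum_(0 <= t < L) w (s t) (s t.+1).

Definition cycle_means : set R := [set x | exists s L,
  [/\ is_walk s L, (0 < L <= n)%N, s L = s 0 & x = walk_weight s L / L%:R]].

Definition max_cycle_mean := sup cycle_means.

Lemma cycle_means_neq0 (K : pred 'I_n) (i0 : 'I_n) :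
  (forall i j, E i j -> K j) -> (forall i, K i -> exists j, E i j) -> K i0 ->
  cycle_means !=set0.
Proof.
move=> EK Ksucc Ki0.
have /choice [f f_succ] : forall i, exists j, K i -> E i j.
  move=> i; case: (boolP (K i)) => [Ki | _]; last by exists i.
  by have [j Eij] := Ksucc i Ki; exists j.
pose s t := iter t f i0.
have Ks t : K (s t) by elim: t => [|t IH] //=; apply: EK (f_succ _ IH).
have [p [q [lt_pq le_qn spq]]] := ord_seq_repeat s.
pose c t := s (p + t)%N.
exists (walk_weight c (q - p) / (q - p)%:R), c, (q - p)%N; split => //.
- by move=> t _; rewrite /c addnS; apply: f_succ.
- by rewrite subn_gt0 lt_pq (leq_trans (leq_subr _ _) le_qn).
- by rewrite /c subnKC ?(ltnW lt_pq) // addn0.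
Qed.

Lemma walk_weight_le s L M :
  (forall t, (t < L)%N -> w (s t) (s t.+1) <= M) -> walk_weight s L <= L%:R * M.
Proof.
move=> le_wM; rewrite /walk_weight mulr_natl -[L in M *+ L]subn0 -sumr_const_nat.
by apply: ler_sum_nat => t /andP [_ ltL]; apply: le_wM.
Qed.

Lemma weight_ub : exists M, forall i j, w i j <= M.
Proof.
exists (\big[Order.max/0]_(ij : 'I_n * 'I_n) w ij.1 ij.2) => i j.
exact: (le_bigmax 0 (fun ij : 'I_n * 'I_n => w ij.1 ij.2) (i, j)).
Qed.

Definition excise (s : nat -> 'I_n) p d t := if (t <= p)%N then s t else s (t + d)%N.

Lemma excise_le s p d t : (t <= p)%N -> excise s p d t = s t.
Proof. by rewrite /excise => ->. Qed.

Lemma excise_ge s p d t : s p = s (p + d)%N -> (p <= t)%N ->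
  excise s p d t = s (t + d)%N.
Proof.
rewrite /excise => spd le_pt; case: leqP => // le_tp.
by have -> : t = p by apply/eqP; rewrite eqn_leq le_tp le_pt.
Qed.

Lemma excise_walk s L p q : (p < q <= L)%N -> s p = s q -> is_walk s L ->
  is_walk (excise s p (q - p)) (L - (q - p)).
Proof.
move=> /andP [lt_pq le_qL] spq walk_s t.
have spd : s p = s (p + (q - p))%N by rewrite subnKC // ltnW.
rewrite ltn_subRL addnC => lt_tL; case: (leqP p t) => [le_pt | lt_tp].
  by rewrite !excise_ge // ?(leqW le_pt) // addSn; apply: walk_s.
rewrite !excise_le ?(ltnW lt_tp) //; apply: walk_s.
exact: leq_ltn_trans (leq_addr _ _) lt_tL.
Qed.

Lemma walk_weight_excise s L p q : (p < q <= L)%N -> s p = s q ->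
  walk_weight s L = walk_weight (excise s p (q - p)) (L - (q - p))
                    + walk_weight (fun t => s (p + t)%N) (q - p).
Proof.
move=> /andP [lt_pq le_qL] spq; set d := (q - p)%N.
have pd : (p + d = q)%N by rewrite subnKC // ltnW.
have spd : s p = s (p + d)%N by rewrite pd.
have le_dL : (d <= L)%N by apply: leq_trans (leq_subr _ _) le_qL.
rewrite /walk_weight (big_cat_nat (leq0n p) (leq_trans (ltnW lt_pq) le_qL)).
rewrite (big_cat_nat (ltnW lt_pq) le_qL) /=.
rewrite [X in _ = X + _](big_cat_nat (leq0n p)) /=; last first.
  by rewrite leq_subRL // addnC pd.
have -> : \sum_(0 <= t < p) w (excise s p d t) (excise s p d t.+1) =
          \sum_(0 <= t < p) w (s t) (s t.+1).
  by apply: eq_big_nat => t /andP [_ lt_tp]; rewrite !excise_le // ltnW.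
have -> : \sum_(p <= t < L - d) w (excise s p d t) (excise s p d t.+1) =
          \sum_(q <= t < L) w (s t) (s t.+1).
  rewrite -{1}pd -{2}[L](subnK le_dL) [in RHS]big_addn addnK.
  apply: eq_big_nat => t /andP [le_pt _].
  by rewrite !excise_ge // ?(leqW le_pt) // addSn.
have -> : \sum_(0 <= t < d) w (s (p + t)%N) (s (p + t.+1)%N) =
          \sum_(p <= t < q) w (s t) (s t.+1).
  rewrite -[in RHS](add0n p) big_addn -/d.
  by apply: eq_big_nat => t _; rewrite (addnC t p) addnS.
by rewrite -addrA [X in _ = _ + X]addrC.
Qed.

Hypothesis has_cycle : cycle_means !=set0.

Lemma has_sup_cycle_means : has_sup cycle_means.
Proof.
split=> //; have [M le_wM] := weight_ub; exists M.
move=> _ [s [L [_ /andP [L_gt0 _] _ ->]]].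
by rewrite ler_pdivrMr ?ltr0n // mulrC; apply: walk_weight_le.
Qed.

Lemma cycle_weight_le s L : is_walk s L -> (0 < L <= n)%N -> s L = s 0 ->
  walk_weight s L <= L%:R * max_cycle_mean.
Proof.
move=> walk_s /[dup] /andP [L_gt0 _] Ln cyc_s.
rewrite mulrC -ler_pdivrMr ?ltr0n //.
by apply: sup_upper_bound; [exact: has_sup_cycle_means | exists s, L].
Qed.

(* Telescoping the sub-potential inequality along a cycle. *)
Lemma max_cycle_mean_le (lam : R) (u : 'I_n -> R) :
  (forall i j, E i j -> w i j + u j <= lam + u i) -> max_cycle_mean <= lam.
Proof.
move=> sub_u; apply: ge_sup => // _ [s [L [walk_s /andP [L_gt0 _] cyc_s ->]]].
rewrite ler_pdivrMr ?ltr0n //.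
have -> : lam * L%:R = \sum_(0 <= t < L) (lam - (u (s t.+1) - u (s t))).
  rewrite sumrB sumr_const_nat subn0 (telescope_sumr (fun t => u (s t))) //.
  by rewrite cyc_s subrr subr0 mulr_natr.
apply: ler_sum_nat => t /andP [_ ltL].
by have := sub_u _ _ (walk_s t ltL); lra.
Qed.

(* A walk longer than n contains a cycle of length at most n, whose mean
   is at most max_cycle_mean: excising it and inducting on L bounds the excess. *)
Lemma walk_excess_bounded : exists M, forall L s, is_walk s L ->
  walk_weight s L - L%:R * max_cycle_mean <= M.
Proof.
have [M le_wM] := weight_ub; set lam := max_cycle_mean.
exists (n%:R * Num.max (M - lam) 0).
elim/ltn_ind => L IH s walk_s; case: (ltnP L n) => [lt_Ln | le_nL].
  have -> : walk_weight s L - L%:R * lam = \sum_(0 <= t < L) (w (s t) (s t.+1) - lam).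
    by rewrite sumrB sumr_const_nat subn0 mulr_natl.
  apply: (@le_trans _ _ (L%:R * Num.max (M - lam) 0)).
    rewrite mulr_natl -[L in _ *+ L]subn0 -sumr_const_nat.
    by apply: ler_sum_nat => t _; rewrite le_max lerD2r le_wM.
  by apply: ler_wpM2r; [rewrite le_max lexx orbT | rewrite ler_nat ltnW].
have [p [q [lt_pq le_qn spq]]] := ord_seq_repeat s.
have le_pqL : (p < q <= L)%N by rewrite lt_pq (leq_trans le_qn).
set d := (q - p)%N.
have d_gt0 : (0 < d)%N by rewrite subn_gt0.
have le_dL : (d <= L)%N by apply: leq_trans (leq_subr _ _) (leq_trans le_qn le_nL).
have cyc_le : walk_weight (fun t => s (p + t)%N) d <= d%:R * lam.
  apply: cycle_weight_le.
  - move=> t lt_td; rewrite addnS; apply: walk_s.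
    apply: leq_trans (leq_trans le_qn le_nL).
    by rewrite -(subnKC (ltnW lt_pq)) ltn_add2l.
  - by rewrite d_gt0 (leq_trans (leq_subr _ _) le_qn).
  - by rewrite addn0 subnKC // ltnW.
have := IH (L - d)%N _ _ (excise_walk le_pqL spq walk_s).
rewrite -subn_gt0 subKn // => /(_ d_gt0).
rewrite (walk_weight_excise le_pqL spq) -/d natrB //; lra.
Qed.

Definition walk_excesses i : set R := [set x | exists s L,
  [/\ is_walk s L, s 0 = i & x = walk_weight s L - L%:R * max_cycle_mean]].

Definition potential i : R := sup (walk_excesses i).

Lemma has_sup_walk_excesses i : has_sup (walk_excesses i).
Proof.
split.
  exists 0, (fun _ => i), 0%N; split => //.
  by rewrite /walk_weight big_geq // mul0r subr0.
have [M bdd] := walk_excess_bounded.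
by exists M => _ [s [L [walk_s _ ->]]]; apply: bdd.
Qed.

Lemma potential_edge i j : E i j ->
  w i j + potential j <= max_cycle_mean + potential i.
Proof.
move=> Eij; suff : potential j <= max_cycle_mean + potential i - w i j by lra.
apply: ge_sup; first by case: (has_sup_walk_excesses j).
move=> _ [s [L [walk_s s0 ->]]].
pose s' t := if t is t'.+1 then s t' else i.
have : walk_weight s' L.+1 - L.+1%:R * max_cycle_mean <= potential i.
  apply: sup_upper_bound; first exact: has_sup_walk_excesses.
  exists s', L.+1; split => //.
  by case=> [|t] /= lt_tL; [rewrite s0 | apply: walk_s].
rewrite /walk_weight big_nat_recl //= s0 -addn1 natrD -/(walk_weight s L); lra.
Qed.

End MaxCycleMean.

(** * The operator T *)

Lemma adde_minl_EFin (R : realDomainType) (x y : \bar R) (c : R) :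
  mine x y + c%:E = mine (x + c%:E) (y + c%:E).
Proof. by rewrite !minEle leeD2rE //; case: ifP. Qed.

Section Operator.
Variables (R : realType) (n p : nat) (V : 'I_n -> 'I_p -> \bar R).
Hypotheses (V_neqy : forall i k, V i k != +oo)
  (row_finite : forall i, exists k, V i k != -oo)
  (col_finite : forall k, exists i, V i k != -oo).

Local Notation T := (Top V).

Lemma entry_EFin i k : V i k != -oo -> exists v : R, V i k = v%:E.
Proof. by move=> vk; exists (fine (V i k)); rewrite fineK // fin_numE vk V_neqy. Qed.

Definition colmax (x : 'I_n -> \bar R) i k :=
  \big[maxe/-oo]_(j < n | j != i) (V j k + x j).

Lemma le_colmax x i k j : j != i -> V j k + x j <= colmax x i k.
Proof. by move=> ji; apply/bigmax_geP; right; exists j. Qed.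

Lemma colmax_le x i k c :
  (forall j, j != i -> V j k != -oo -> V j k + x j <= c) -> colmax x i k <= c.
Proof.
move=> le_c; apply: bigmax_le => [|j ji]; first exact: leNye.
by case: (eqVneq (V j k) -oo) => [->|vj]; [rewrite addNye leNye | apply: le_c].
Qed.

Lemma colmax_geP x i k c : c <= colmax x i k -> c != -oo ->
  exists2 j, j != i & c <= V j k + x j.
Proof. by move=> /bigmax_geP [|//]; rewrite leeNy_eq => /eqP ->. Qed.

Lemma colmax_eqNy x i k : colmax x i k = -oo <->
  (forall j, j != i -> V j k != -oo -> x j = -oo).
Proof.
split=> [cNy j ji vj | xNy].
  by move: (le_colmax x k ji); rewrite cNy leeNy_eq adde_eq_ninfty (negbTE vj) => /eqP.
apply/eqP; rewrite -leeNy_eq; apply: colmax_le => j ji vj.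
by rewrite xNy // addeNy.
Qed.

Lemma Top_le_term x i k : V i k != -oo -> T x i <= - V i k + colmax x i k.
Proof. by move=> vk; apply/bigmin_leP; right; exists k. Qed.

Lemma le_Top x i c :
  (forall k, V i k != -oo -> c <= - V i k + colmax x i k) -> c <= T x i.
Proof. by move=> le_c; apply: le_bigmin => //; exact: leey. Qed.

Lemma Top_leP x i c : T x i <= c -> c != +oo ->
  exists2 k, V i k != -oo & - V i k + colmax x i k <= c.
Proof. by move=> /bigmin_leP [|//]; rewrite leye_eq => /eqP ->. Qed.

Lemma Top_eqNyP x i : T x i = -oo <-> exists2 k, V i k != -oo & colmax x i k = -oo.
Proof.
split=> [TNy | [k vk cNy]].
  have [k vk] : exists2 k, V i k != -oo & - V i k + colmax x i k <= -oo.
    by apply: Top_leP; rewrite ?TNy.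
  have [v ->] := entry_EFin vk; rewrite leeNy_eq adde_eq_ninfty /=.
  by move=> /eqP cNy; exists k.
by apply/eqP; rewrite -leeNy_eq; apply: le_trans (Top_le_term x vk) _; rewrite cNy addeNy.
Qed.

Lemma Top_neqNy_witness x i k : T x i != -oo -> V i k != -oo ->
  exists2 j, j != i & V j k != -oo /\ x j != -oo.
Proof.
move=> TnNy vk; case: (pselect (exists2 j, j != i & V j k != -oo /\ x j != -oo)) => // none.
suff : T x i = -oo by move/eqP: TnNy.
apply/Top_eqNyP; exists k; first done.
apply/colmax_eqNy => j ji vj.
by apply/eqP; apply: contra_notT none => xj; exists j.
Qed.

Lemma Top_mono x y : (forall j, x j <= y j) -> forall i, T x i <= T y i.
Proof.
move=> le_xy i; apply: le_Top => k vk; apply: le_trans (Top_le_term x vk) _.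
apply: leeD2l; apply: colmax_le => j ji _.
by apply: le_trans (le_colmax y k ji); apply: leeD2l.
Qed.

Lemma Top_shift x (c : R) i : T (fun j => x j + c%:E) i = T x i + c%:E.
Proof.
rewrite /Top (big_morph (fun y => y + c%:E) (fun a b => adde_minl_EFin a b c) (erefl _)).
apply: eq_bigr => k _; rewrite -addeA; congr (_ + _).
rewrite (big_morph (fun y => y + c%:E) (fun a b => adde_maxl a b c%:E) (erefl _)).
by apply: eq_bigr => j _; rewrite addeA.
Qed.

Lemma iter_Top_shift m x (c : R) :
  iter m T (fun j => x j + c%:E) = (fun j => iter m T x j + c%:E).
Proof. by elim: m => [|m IH] //=; apply: funext => i; rewrite IH Top_shift. Qed.

Lemma iter_Top_mono m x y :
  (forall j, x j <= y j) -> forall j, iter m T x j <= iter m T y j.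
Proof. by move=> le_xy; elim: m => [|m IH] //= j; apply: Top_mono. Qed.

Lemma Rmax_vec_Top x : Rmax_vec x -> Rmax_vec (T x).
Proof.
move=> Rx i; have [k vk] := row_finite i; have [v Ev] := entry_EFin vk.
rewrite /in_Rmax -ltey; apply: le_lt_trans (Top_le_term x vk) _.
rewrite Ev lte_add_pinfty ?ltry //; apply/bigmax_ltP; split=> // j _.
by rewrite lte_add_pinfty // ltey ?V_neqy ?Rx.
Qed.

Lemma supp_Top_subset x y : supp x \subset supp y -> supp (T x) \subset supp (T y).
Proof.
move=> /fintype.subsetP sxy; apply/fintype.subsetP => i; rewrite !inE; apply: contraNN.
move=> /eqP /Top_eqNyP [k vk /colmax_eqNy yNy]; apply/eqP/Top_eqNyP.
exists k => //; apply/colmax_eqNy => j ji vj.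
by have := sxy j; rewrite !inE yNy // eqxx => /contraFeq; apply.
Qed.

Lemma supp_Top_eq x y : supp x = supp y -> supp (T x) = supp (T y).
Proof. by move=> sxy; apply/eqP; rewrite finset.eqEsubset !supp_Top_subset // sxy. Qed.

Lemma supp_iter_Top_subset m :
  supp (iter m.+1 T (fun _ => 0)) \subset supp (iter m T (fun _ => 0)).
Proof.
elim: m => [|m IH]; last exact: supp_Top_subset.
by apply/fintype.subsetP => i _; rewrite inE.
Qed.

Lemma card_supp_iter_Top :
  (forall I : {set 'I_n}, I != finset.set0 -> ~ left_invariant T I) ->
  forall m, (#|supp (iter m T (fun _ => 0%E))| <= n - m)%N.
Proof.
move=> no_inv; elim=> [|m IH]; first by rewrite subn0 (leq_trans (max_card _)) ?card_ord.
set S := supp (iter m T _) in IH *; set S' := supp (iter m.+1 T _).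
have sub_S : S' \subset S by exact: supp_iter_Top_subset.
case: (eqVneq S finset.set0) => [S0 | S_n0].
  by move: sub_S; rewrite S0 finset.subset0 => /eqP ->; rewrite cards0.
have : S' \proper S.
  rewrite finset.properEneq sub_S andbT; apply/eqP => eqS; apply: (no_inv _ S_n0).
  move=> _ [x [Rx sx] <-]; split; first exact: Rmax_vec_Top.
  by rewrite -eqS /S' /= (supp_Top_eq sx).
by move=> /proper_card; lia.
Qed.

Lemma iter_Top_eqNy_of_no_invariant_part :
  (forall I : {set 'I_n}, I != finset.set0 -> ~ left_invariant T I) ->
  iter n T (fun _ => 0) = (fun _ => -oo).
Proof.
move=> /card_supp_iter_Top /(_ n); rewrite subnn leqn0 cards_eq0 => /eqP S0.
apply: funext => i; apply/eqP.
have : i \notin supp (iter n T (fun _ => 0)) by rewrite S0 inE.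
by rewrite inE negbK.
Qed.

Lemma rho_eqNy_of_iter_Top_eqNy :
  iter n T (fun _ => 0) = (fun _ => -oo) -> rho T = -oo.
Proof.
move=> iterNy; apply/eqP; rewrite -leeNy_eq; apply: ge_ereal_sup.
move=> l [l_neqy [u [Ru [[i0 ui0] Tu]]]].
case: l l_neqy Tu => [r _ Tu | // | _ _]; last exact: leNye.
have iter_u m : iter m T u = (fun i => u i + (m%:R * r)%:E).
  elim: m => [|m IH] /=; first by apply: funext => i; rewrite mul0r adde0.
  rewrite IH; apply: funext => i; rewrite Top_shift Tu [r%:E + _]addeC -addeA -EFinD.
  by congr (_ + _%:E); rewrite -natr1 mulrDl mul1r addrC.
pose c := \big[Order.max/0%R]_j fine (u j).
have le_u0 j : u j + (- c)%:E <= 0.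
  rewrite -leeBrDr // ?sub0e ?EFinN ?oppeK //.
  have := le_bigmax 0%R (fun j => fine (u j)) j.
  by move: (Ru j); rewrite /in_Rmax; case: (u j) => [x||] //= _ le_xc; rewrite ?lee_fin ?leNye.
have := iter_Top_mono n le_u0 i0.
rewrite iterNy iter_Top_shift iter_u leeNy_eq.
by have [v ->] : exists v : R, u i0 = v%:E by move: (Ru i0) ui0; case: (u i0) => [x||] //; exists x.
Qed.

(** * Balls in Col V *)

Lemma entry_gap_bound : exists W : R, (0 <= W)%R /\
  forall i j k, (fine (V j k) - fine (V i k) <= W)%R.
Proof.
pose gap (t : 'I_n * 'I_n * 'I_p) := (fine (V t.1.2 t.2) - fine (V t.1.1 t.2))%R.
exists (\big[Order.max/0%R]_t gap t); split; first by rewrite bigmax_idl le_max lexx.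
by move=> i j k; apply: (le_bigmax 0%R gap (i, j, k)).
Qed.

Lemma Top_le_of_ball_sub_Col (a : 'I_n -> R) (r : R) : (0 <= r)%R ->
  hball a r `<=` Col V -> forall i, T (fun j => (- a j)%:E) i <= (- a i - r)%:E.
Proof.
move=> r_ge0 ball_sub i.
pose b j := ((a j + (if j == i then r else 0))%R)%:E.
have [z [Rz bE]] : Col V b.
  apply: ball_sub; split=> //; apply: ereal_inf_lbound.
  exists 0%R, (- r)%R; split; first by rewrite sub0r opprK.
  by move=> j; rewrite /b -!EFinD !lee_fin; case: (j == i); split; lra.
have /bigmax_geP [|[k _ le_k]] : (a i + r)%:E <= mp_mulv V z i.
- by rewrite -bE /b eqxx.
- by rewrite leeNy_eq.
have vk : V i k != -oo by apply: contraTneq le_k => ->; rewrite addNye leeNy_eq.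
have [v Ev] := entry_EFin vk.
have [zk Ezk] : exists zk : R, z k = zk%:E.
  move: (Rz k) le_k; rewrite /in_Rmax; case: (z k) => [x _ _ | // | _].
    by exists x.
  by rewrite addeNy leeNy_eq.
rewrite Ev Ezk -EFinD lee_fin in le_k.
apply: le_trans (Top_le_term _ vk) _; rewrite Ev.
have : colmax (fun j => (- a j)%:E) i k <= (- zk)%:E.
  apply: colmax_le => j ji vj; have [w Ew] := entry_EFin vj.
  have : V j k + z k <= mp_mulv V z j by apply/bigmax_geP; right; exists k.
  by rewrite -bE /b (negbTE ji) Ew Ezk -!EFinD !lee_fin; lra.
move=> /(leeD2l (- v%:E)) /le_trans; apply; rewrite -EFinN -EFinD lee_fin; lra.
Qed.

Definition resid (b : 'I_n -> R) k :=
  \big[mine/+oo]_(j < n | V j k != -oo) ((b j)%:E - V j k).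

Lemma resid_Rmax b : Rmax_vec (resid b).
Proof.
move=> k; have [j vj] := col_finite k; have [v Ev] := entry_EFin vj.
rewrite /in_Rmax -ltey; apply: (@le_lt_trans _ _ ((b j)%:E - V j k)).
  by apply/bigmin_leP; right; exists j.
by rewrite Ev -EFinB ltry.
Qed.

Lemma mp_mulv_resid_le b i : mp_mulv V (resid b) i <= (b i)%:E.
Proof.
apply: bigmax_le => [|k _]; first exact: leNye.
case: (eqVneq (V i k) -oo) => [->|vk]; first by rewrite addNye leNye.
have [v Ev] := entry_EFin vk.
have : resid b k <= (b i)%:E - V i k by apply/bigmin_leP; right; exists i.
by move=> /(leeD2l (V i k)) /le_trans; apply; rewrite Ev -EFinB -EFinD lee_fin; lra.
Qed.

(* The vector b of the ball is recovered from its residual: the witness k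
   of T(-a)_i <= -a_i - (r + 1) attains the maximum in (V (resid b))_i. *)
Lemma ball_sub_Col_of_Top_le (a : 'I_n -> R) (r : R) :
  (forall i, T (fun j => (- a j)%:E) i <= (- a i - (r + 1))%:E) ->
  hball a r `<=` Col V.
Proof.
move=> Ta b [Rb d_ab].
have /ereal_inf_lt [_ [l [m [-> ab_lm]]]] :
    hilbert_d (fun i => (a i)%:E) b < (r + 1)%:E.
  by apply: le_lt_trans d_ab _; rewrite lte_fin; lra.
rewrite lte_fin => lt_lm.
have [bb bE] : exists bb : 'I_n -> R, b = fun j => (bb j)%:E.
  exists (fun j => fine (b j)); apply: funext => j; have [_] := ab_lm j.
  by move: (Rb j); rewrite /in_Rmax; case: (b j).
subst b; exists (resid bb); split; first exact: resid_Rmax.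
apply: funext => i; apply/eqP; rewrite eq_le mp_mulv_resid_le andbT.
have [k vk Tk] := Top_leP (Ta i) isT; have [v Ev] := entry_EFin vk.
have resid_ge : (bb i)%:E - V i k <= resid bb k.
  apply: le_bigmin => [|j vj]; first exact: leey.
  case: (eqVneq j i) => [-> // | ji]; have [w Ew] := entry_EFin vj.
  have := le_trans (leeD2l _ (le_colmax (fun j => (- a j)%:E) k ji)) Tk.
  rewrite Ev Ew -EFinN -!EFinD !lee_fin.
  by have := ab_lm i; have := ab_lm j; rewrite -!EFinD !lee_fin; lra.
apply: (@le_trans _ _ (V i k + resid bb k)); last first.
  by apply/bigmax_geP; right; exists k.
by apply: le_trans (leeD2l _ resid_ge); rewrite Ev -EFinB -EFinD lee_fin; lra.
Qed.

Lemma inner_radius_eqy :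
  (forall r : R, (0 <= r)%R -> exists a, hball a r `<=` Col V) -> inner_radius V = +oo.
Proof.
move=> balls; rewrite /inner_radius; set s := ereal_sup _.
have le_s r : (0 <= r)%R -> r%:E <= s.
  by move=> r_ge0; apply: ereal_sup_ubound; exists r => //; split => //; apply: balls.
case: s le_s => [x | // | ] le_s; last by have := le_s 0%R (lexx _).
have := le_s _ (addr_ge0 (normr_ge0 x) ler01); rewrite lee_fin => le_x.
by clear le_s; exfalso; have := ler_norm x; lra.
Qed.

Definition part_vec (K : {set 'I_n}) (u : 'I_n -> R) j :=
  if j \in K then (u j)%:E else -oo.

Lemma part_part_vec K u : part K (part_vec K u).
Proof.
split=> [j | ]; first by rewrite /in_Rmax /part_vec; case: ifP.
by apply/setP => j; rewrite inE /part_vec; case: (j \in K).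
Qed.

Lemma left_invariant_step (K : {set 'I_n}) : left_invariant T K ->
  forall i k, i \in K -> V i k != -oo -> exists2 j, j != i & V j k != -oo /\ j \in K.
Proof.
move=> invK i k iK vk.
have [_ supp_T] := invK _ (ex_intro2 _ _ _ (part_part_vec K (fun=> 0%R)) erefl).
have : i \in supp (T (part_vec K (fun=> 0%R))) by rewrite supp_T.
rewrite inE => /Top_neqNy_witness /(_ vk) [j ji [vj xj]].
by exists j => //; split => //; move: xj; rewrite /part_vec; case: ifP.
Qed.

Lemma no_invariant_part_of_inner_radius : inner_radius V = +oo ->
  forall I : {set 'I_n}, I != finset.set0 -> ~ left_invariant T I.
Proof.
move=> rad_y K /set0Pn [i1 i1K] invK.
have [W [_ gapW]] := entry_gap_bound.
have /ereal_sup_gt [_ [r [r_ge0 [a ball_sub]] <-]] : (W + 1)%:E < inner_radius V.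
  by rewrite rad_y ltry.
rewrite lte_fin => lt_Wr.
case: (arg_maxP a i1K) => i0 i0K a_max.
have := Top_le_of_ball_sub_Col r_ge0 ball_sub i0.
suff : (- a i0 - W)%:E <= T (fun j => (- a j)%:E) i0.
  by move=> /le_trans /[apply]; rewrite lee_fin; lra.
apply: le_Top => k vk; have [j ji [vj jK]] := left_invariant_step invK i0K vk.
apply: le_trans (leeD2l _ (le_colmax _ k ji)).
have [v Ev] := entry_EFin vk; have [w Ew] := entry_EFin vj.
rewrite Ev Ew -EFinN -!EFinD lee_fin.
by have := gapW j i0 k; have := a_max j jK; rewrite Ev Ew /=; lra.
Qed.

Lemma inner_radius_of_iter_Top_eqNy :
  iter n T (fun _ => 0) = (fun _ => -oo) -> inner_radius V = +oo.
Proof.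
move=> iterNy.
have escapes i : exists m, iter m T (fun _ => 0) i == -oo by exists n; rewrite iterNy.
pose e i := ex_minn (escapes i).
have e_spec i : iter (e i) T (fun _ => 0) i = -oo /\
    forall m, iter m T (fun _ => 0) i = -oo -> (e i <= m)%N.
  by rewrite /e; case: ex_minnP => m /eqP m_Ny m_min; split => // m' /eqP /m_min.
have escape_step i : exists2 k, V i k != -oo &
    forall j, j != i -> V j k != -oo -> (e j < e i)%N.
  have [] := e_spec i; case: (e i) => [|m] /=; first by [].
  move=> /Top_eqNyP [k vk /colmax_eqNy escaped] _; exists k => // j ji vj.
  by rewrite ltnS; apply: (proj2 (e_spec j)); apply: escaped.
have [W [W_ge0 gapW]] := entry_gap_bound.
apply: inner_radius_eqy => r r_ge0; set C := (W + r + 1)%R.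
have C_ge0 : (0 <= C)%R by rewrite /C; lra.
exists (fun i => - (C * (e i)%:R))%R; apply: ball_sub_Col_of_Top_le => i.
have [k vk e_lt] := escape_step i; have [v Ev] := entry_EFin vk.
apply: le_trans (Top_le_term _ vk) _; rewrite Ev.
have : colmax (fun j => (- - (C * (e j)%:R))%:E) i k <= (v + C * (e i)%:R - C + W)%:E.
  apply: colmax_le => j ji vj; have [w Ew] := entry_EFin vj.
  have : ((e j)%:R + 1 <= (e i)%:R :> R)%R by rewrite natr1 ler_nat; apply: e_lt.
  move=> /(ler_wpM2l C_ge0); rewrite opprK Ew -EFinD lee_fin mulrDr mulr1.
  by have := gapW i j k; rewrite Ev Ew /=; lra.
move=> /(leeD2l (- v%:E)) /le_trans; apply.
by rewrite -EFinN -EFinD lee_fin /C; lra.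
Qed.

(** * Eigenvectors on an invariant part *)

Definition vec_inf (v : nat -> 'I_n -> \bar R) j := ereal_inf [set v m j | m in [set: nat]].

Lemma vec_inf_le v m j : vec_inf v j <= v m j.
Proof. by apply: ereal_inf_lbound; exists m. Qed.

Lemma le_vec_inf v j c : (forall m, c <= v m j) -> c <= vec_inf v j.
Proof. by move=> le_c; apply/ereal_infP => _ [m _ <-]. Qed.

(* Along a decreasing sequence the maximum in colmax is eventually attained
   by a single row, so colmax commutes with the infimum. *)
Lemma colmax_vec_inf (v : nat -> 'I_n -> \bar R) i k (c : R) :
  (forall m m' j, (m <= m')%N -> v m' j <= v m j) ->
  (forall m, c%:E <= colmax (v m) i k) -> c%:E <= colmax (vec_inf v) i k.
Proof.
move=> anti_v le_c.
have [j ji le_cj] := ex_forall_antitone (P := fun j => j != i)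
  (Q := fun m j => c%:E <= V j k + v m j)
  (fun m m' j le_mm' le_c' => le_trans le_c' (leeD2l _ (anti_v _ _ j le_mm')))
  (fun m => colmax_geP (le_c m) isT).
apply: le_trans (le_colmax _ k ji).
have vj : V j k != -oo by apply: contraTneq (le_cj 0%N) => ->; rewrite addNye leeNy_eq.
have [w Ew] := entry_EFin vj; rewrite Ew -leeBlDl // -EFinB.
by apply: le_vec_inf => m; rewrite EFinB leeBlDl // -Ew.
Qed.

Section NormalizedIteration.
Variables (lam : R) (U : 'I_n -> \bar R).
Hypotheses (RU : Rmax_vec U) (TU : forall i, T U i <= lam%:E + U i).

Definition normalized_iter m := iter m (fun x i => T x i - lam%:E) U.
Local Notation v := normalized_iter.

Lemma Top_normalized_iter m i : T (v m) i = lam%:E + v m.+1 i.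
Proof. by rewrite /normalized_iter /= addeC -addeA -EFinD addNr adde0. Qed.

Lemma normalized_iter_antitone m m' i : (m <= m')%N -> v m' i <= v m i.
Proof.
have step l j : v l.+1 j <= v l j.
  rewrite /normalized_iter; elim: l j => [|l IH] j /=; first by rewrite EFinN leeBlDl.
  by apply: leeD2r; apply: Top_mono => h; apply: IH.
move=> /subnK <-; elim: (m' - m)%N => [|d IH] //.
by rewrite addSn; apply: le_trans (step _ i) IH.
Qed.

Lemma Top_vec_inf_normalized_iter i : T (vec_inf v) i = lam%:E + vec_inf v i.
Proof.
apply/eqP; rewrite eq_le; apply/andP; split.
  rewrite -leeBlDl //; apply: le_vec_inf => m; rewrite leeBlDl //.
  apply: le_trans (Top_mono (vec_inf_le v m) i) _.
  by rewrite Top_normalized_iter leeD2l // normalized_iter_antitone.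
case: (eqVneq (vec_inf v i) -oo) => [-> | infNy]; first by rewrite addeNy leNye.
have [x Ex] : exists x : R, vec_inf v i = x%:E.
  have : vec_inf v i != +oo.
    by rewrite -ltey (le_lt_trans (vec_inf_le v 0 i)) // ltey; apply: RU.
  by case: (vec_inf v i) infNy => // x _ _; exists x.
rewrite Ex; apply: le_Top => k vk; have [w Ew] := entry_EFin vk.
suff : (w + (lam + x))%:E <= colmax (vec_inf v) i k.
  by rewrite Ew [- _ + _]addeC leeBrDl // -!EFinD.
apply: colmax_vec_inf => [m m' j | m]; first exact: normalized_iter_antitone.
have := Top_le_term (v m) vk; rewrite Top_normalized_iter Ew [- _ + _]addeC leeBrDl //.
apply: le_trans; rewrite !EFinD; do 2 apply: leeD2l.
by rewrite -Ex vec_inf_le.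
Qed.

Lemma rho_ge_of_bounded_normalized_iter :
  (exists i (c : R), forall m, c%:E <= v m i) -> lam%:E <= rho T.
Proof.
move=> [i [c le_c]]; apply: ereal_sup_ubound; split=> //; exists (vec_inf v); split.
  move=> j; rewrite /in_Rmax -ltey; apply: le_lt_trans (vec_inf_le v 0 j) _.
  by rewrite ltey; apply: RU.
split; last by apply: funext => j; rewrite Top_vec_inf_normalized_iter.
by exists i; apply: contraTneq (le_vec_inf le_c) => ->; rewrite leeNy_eq.
Qed.

Definition averaged_iter M i :=
  \big[mine/+oo]_(t < M) (v t i + (t%:R / M%:R)%:E).

Lemma averaged_iter_attained M i : (0 < M)%N ->
  exists2 t, (t < M)%N & averaged_iter M i = v t i + (t%:R / M%:R)%:E.
Proof.
move=> M_gt0; rewrite /averaged_iter.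
have [t _ ->] := @eq_bigmin _ _ _ (+oo : \bar R) (Ordinal M_gt0) predT
  (fun t : 'I_M => v t i + (t%:R / M%:R)%:E) erefl (fun _ _ => leey _).
by exists t.
Qed.

(* If T^M U <= U + M lam - 1, mixing the first M normalized iterates with
   weights t / M yields a super-eigenvector with eigenvalue lam - 1/M. *)
Lemma Top_averaged_iter M : (0 < M)%N -> (forall i, v M i + 1 <= U i) ->
  forall i, T (averaged_iter M) i <= (lam - M%:R^-1)%:E + averaged_iter M i.
Proof.
move=> M_gt0 sink i; set d := (M%:R^-1)%R.
have MdE : (M%:R * d = 1)%R by rewrite /d mulfV // pnatr_eq0 -lt0n.
have le_t t : (t < M)%N -> T (averaged_iter M) i <= lam%:E + v t.+1 i + (t%:R * d)%:E.
  move=> lt_tM; rewrite -Top_normalized_iter -Top_shift; apply: Top_mono => j.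
  by apply/bigmin_leP; right; exists (Ordinal lt_tM).
have [[|t] lt_tM ->] := averaged_iter_attained i M_gt0; rewrite -/d.
  have Md1 : ((M.-1)%:R * d = 1 - d :> R)%R.
    by move: MdE; rewrite -[in (M%:R)%R](prednK M_gt0) -natr1 mulrDl mul1r; lra.
  have lt_pM : (M.-1 < M)%N by rewrite ltn_predL.
  apply: le_trans (le_t _ lt_pM) _.
  rewrite prednK // Md1 mul0r adde0.
  change (v 0 i) with (U i); move: (sink i) (RU i); rewrite /in_Rmax.
  case: (U i) => [y | // | ] le_vU _; last first.
    move: le_vU; rewrite leeNy_eq adde_eq_ninfty orbF => /eqP ->.
    by rewrite addeNy addNye leNye.
  case: (v M i) le_vU => [x | | ] le_vU; last by rewrite addeNy addNye leNye.
    by rewrite -!EFinD !lee_fin in le_vU *; lra.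
  by rewrite addye in le_vU.
apply: le_trans (le_t t (ltnW lt_tM)) _.
case: (v t.+1 i) => [x | | ]; last by rewrite addeNy addNye leNye.
  by rewrite -!EFinD lee_fin -natr1; lra.
by rewrite addey // addye // addey.
Qed.

End NormalizedIteration.

Lemma part_addr (K : {set 'I_n}) x (c : R) : part K x -> part K (fun i => x i + c%:E).
Proof.
move=> [Rx suppx]; split=> [i | ].
  by move: (Rx i); rewrite /in_Rmax; case: (x i).
by rewrite -suppx; apply/setP => i; rewrite !inE; case: (x i).
Qed.

Lemma part_EFin (K : {set 'I_n}) x i : part K x -> i \in K -> exists r : R, x i = r%:E.
Proof.
move=> [Rx <-]; rewrite inE; move: (Rx i); rewrite /in_Rmax.
by case: (x i) => [r _ _ | // | //]; exists r.
Qed.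

Section InvariantPart.
Variables (K : {set 'I_n}) (i0 : 'I_n).
Hypotheses (i0K : i0 \in K) (invK : left_invariant T K).

Local Notation policy := {ffun 'I_n -> 'I_p}.

Lemma part_Top x : part K x -> part K (T x).
Proof. by move=> Kx; apply: invK; exists x. Qed.

Definition policy_graph (s : policy) : rel 'I_n :=
  fun i j => [&& i \in K, j \in K, j != i & V j (s i) != -oo].

Definition policy_weight (s : policy) i j : R :=
  (fine (V j (s i)) - fine (V i (s i)))%R.

Definition admissible (s : policy) :=
  [forall i, (i \in K) ==> (V i (s i) != -oo)].

Definition policy_value (s : policy) :=
  max_cycle_mean (policy_graph s) (policy_weight s).

Lemma admissibleP (s : policy) :
  reflect (forall i, i \in K -> V i (s i) != -oo) (admissible s).
Proof.
apply: (iffP forallP) => [adm i iK | adm i]; first by have := adm i; rewrite iK.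
by apply/implyP => /adm.
Qed.

Lemma policy_cycle_means_neq0 (s : policy) : admissible s ->
  cycle_means (policy_graph s) (policy_weight s) !=set0.
Proof.
move=> /admissibleP adm; apply: (@cycle_means_neq0 _ _ _ _ (fun j => j \in K) i0) => //.
  by move=> i j /and4P [].
move=> i iK; have [j ji [vj jK]] := left_invariant_step invK iK (adm i iK).
by exists j; rewrite /policy_graph iK jK ji vj.
Qed.

(* The potentials of the policy graph give a super-eigenvector of the
   max-plus operator of the policy, hence of T <= that operator. *)
Lemma super_eigen_of_policy (s : policy) : admissible s ->
  exists2 u, part K u & forall i, T u i <= (policy_value s)%:E + u i.
Proof.
move=> adm; have ne_s := policy_cycle_means_neq0 adm; move/admissibleP: adm => adm.
set pot := potential (policy_graph s) (policy_weight s).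
exists (part_vec K pot) => [|i]; first exact: part_part_vec.
case: (boolP (i \in K)) => iK; last first.
  have [_ suppT] := part_Top (part_part_vec K pot).
  have : i \notin supp (T (part_vec K pot)) by rewrite suppT.
  by rewrite inE negbK => /eqP ->; rewrite leNye.
have [v Ev] := entry_EFin (adm i iK).
apply: le_trans (Top_le_term _ (adm i iK)) _.
have : colmax (part_vec K pot) i (s i) <= (v + policy_value s + pot i)%:E.
  apply: colmax_le => j ji vj; rewrite /part_vec; case: ifP => jK; last first.
    by rewrite addeNy leNye.
  have [w Ew] := entry_EFin vj.
  have edge : policy_graph s i j by rewrite /policy_graph iK jK ji vj.
  have wE : policy_weight s i j = (w - v)%R by rewrite /policy_weight Ev Ew.
  have := potential_edge ne_s edge; rewrite wE -/pot -/(policy_value s) => le_pot.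
  by rewrite Ew -EFinD lee_fin; lra.
move=> /(leeD2l (- V i (s i))) /le_trans; apply.
by rewrite Ev /part_vec iK -EFinN -!EFinD lee_fin; lra.
Qed.

Lemma policy_value_le_of_super_eigen (lam : R) u : part K u ->
  (forall i, T u i <= lam%:E + u i) -> exists2 s, admissible s & (policy_value s <= lam)%R.
Proof.
move=> partu Tu.
have /choice [sf sf_spec] : forall i, exists k, i \in K ->
    V i k != -oo /\ - V i k + colmax u i k <= lam%:E + u i.
  move=> i; case: (boolP (i \in K)) => iK; last by have [k _] := row_finite i; exists k.
  have lam_u : lam%:E + u i != +oo by have [r ->] := part_EFin partu iK.
  by have [k vk le_k] := Top_leP (Tu i) lam_u; exists k.
pose s := [ffun i => sf i].
have adm : admissible s by apply/admissibleP => i iK; rewrite ffunE; case: (sf_spec i iK).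
exists s => //.
apply: (max_cycle_mean_le (policy_cycle_means_neq0 adm) (u := fun i => fine (u i))).
move=> i j /and4P [iK jK ji]; rewrite /policy_weight !ffunE => vj.
have [vi le_i] := sf_spec i iK.
have [v Ev] := entry_EFin vi; have [w Ew] := entry_EFin vj.
have [ui Eui] := part_EFin partu iK; have [uj Euj] := part_EFin partu jK.
have := le_trans (leeD2l (- V i (sf i)) (le_colmax u (sf i) ji)) le_i.
by rewrite Ev Ew Eui Euj -EFinN -!EFinD lee_fin /=; lra.
Qed.

Lemma least_super_eigenvalue : exists (lam : R) U,
  [/\ part K U, forall i, T U i <= lam%:E + U i &
      forall lam' u, part K u -> (forall i, T u i <= lam'%:E + u i) -> (lam <= lam')%R].
Proof.
have /choice [k0 k0_spec] := row_finite.
have adm0 : admissible [ffun i => k0 i] by apply/admissibleP => i _; rewrite ffunE.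
case: (arg_minP policy_value adm0) => s adm_s s_min.
have [U partU TU] := super_eigen_of_policy adm_s.
exists (policy_value s), U; split => // lam' u partu Tu.
have [s' adm' le_s'] := policy_value_le_of_super_eigen partu Tu.
exact: le_trans (s_min s' adm') le_s'.
Qed.

Lemma part_normalized_iter lam U m : part K U -> part K (normalized_iter lam U m).
Proof.
by move=> partU; elim: m => [|m IH] //=; rewrite EFinN; apply: part_addr; apply: part_Top.
Qed.

Lemma part_averaged_iter lam U M : part K U -> (0 < M)%N ->
  part K (averaged_iter lam U M).
Proof.
move=> partU M_gt0; have part_v m := part_normalized_iter lam m partU.
split=> [i | ].
  have [t _ ->] := averaged_iter_attained lam U i M_gt0.
  by move: ((part_v t).1 i); rewrite /in_Rmax; case: (normalized_iter _ _ _ _).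
apply/setP => i; rewrite inE; have [t _ ->] := averaged_iter_attained lam U i M_gt0.
by rewrite adde_eq_ninfty /= orbF -(part_v t).2 inE.
Qed.

Lemma normalized_iter_sinks lam U : part K U -> (forall i, T U i <= lam%:E + U i) ->
  ~ (exists i (c : R), forall m, c%:E <= normalized_iter lam U m i) ->
  exists2 M, (0 < M)%N & forall i, normalized_iter lam U M i + 1 <= U i.
Proof.
move=> partU TU unbdd; set v := normalized_iter lam U.
have /choice [m_ m_spec] : forall i, exists m, i \in K -> v m i + 1 <= U i.
  move=> i; case: (boolP (i \in K)) => iK; last by exists 0%N.
  have [y Ey] := part_EFin partU iK.
  case: (pselect (exists m, v m i < (y - 1)%:E)) => [[m lt_m] | none].
    exists m => _; rewrite Ey; move: lt_m; case: (v m i) => [x||] //.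
      by rewrite -EFinD !lte_fin lee_fin; lra.
    by rewrite addNye leNye.
  exfalso; apply: unbdd; exists i, (y - 1)%R => m.
  by rewrite leNgt; apply/negP => lt_m; apply: none; exists m.
exists (\max_i m_ i).+1 => // i; case: (boolP (i \in K)) => iK.
  apply: le_trans (m_spec i iK); apply: leeD2r; apply: (normalized_iter_antitone TU).
  by apply: ltnW; rewrite ltnS (leq_bigmax i).
have : i \notin supp (v (\max_i m_ i).+1) by rewrite (part_normalized_iter lam _ partU).2.
by rewrite inE negbK => /eqP ->; rewrite addNye leNye.
Qed.

Lemma rho_gtNy_of_invariant_part : -oo < rho T.
Proof.
have [lam [U [partU TU lam_min]]] := least_super_eigenvalue.
case: (pselect (exists i (c : R), forall m, c%:E <= normalized_iter lam U m i)).
  move=> /(rho_ge_of_bounded_normalized_iter partU.1 TU); apply: lt_le_trans.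
  exact: ltNyr.
move=> /(normalized_iter_sinks partU TU) [M M_gt0 sink].
have := lam_min _ _ (part_averaged_iter lam partU M_gt0)
  (Top_averaged_iter partU.1 M_gt0 sink).
by rewrite lerDl oppr_ge0 leNgt invr_gt0 ltr0n M_gt0.
Qed.

End InvariantPart.

End Operator.

Unset Implicit Arguments.

Theorem corollary3p7 (R : realType) (n p : nat) (V : 'I_n -> 'I_p -> \bar R)
  (HV : forall i k, V i k != +oo)
  (Hrow : forall i, exists k, V i k != -oo)
  (Hcol : forall k, exists i, V i k != -oo) :
  [<-> inner_radius V = +oo;
       (forall I : {set 'I_n}, I != finset.set0 -> ~ left_invariant (Top V) I);
       iter n (Top V) (fun _ => 0) = (fun _ => -oo);
       rho (Top V) = -oo].
Proof.
have no_invariant_part := iter_Top_eqNy_of_no_invariant_part HV Hrow.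
tfae.
- exact: no_invariant_part_of_inner_radius.
- exact: no_invariant_part.
- exact: rho_eqNy_of_iter_Top_eqNy.
- move=> rhoNy; apply: (inner_radius_of_iter_Top_eqNy HV Hcol).
  apply: no_invariant_part => I /set0Pn [i0 i0I] invI.
  by have := rho_gtNy_of_invariant_part HV Hrow i0I invI; rewrite rhoNy.
Qed.
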